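(* Let $f\in H^2(\mathbb{D})$. Then $|\langle f,e_{n,a}\rangle|\to 0$ as $|a|\to 1$, uniformly in $n\in\mathbb{N}$; that is, for every $\varepsilon>0$ there is $r<1$ such that $|\langle f,e_{n,a}\rangle|<\varepsilon$ for all $a\in\mathbb{D}$ with $|a|>r$ and all $n\in\mathbb{N}$.
   Context: $\mathbb{D}$ is the open unit disc; $H^2(\mathbb{D})$ the Hardy space with inner product $\langle f,g\rangle=\frac{1}{2\pi}\int_0^{2\pi}f(e^{it})\overline{g(e^{it})}\,dt$. For $n\in\mathbb{N}=\{0,1,\dots\}$ and $a\in\mathbb{D}$, $k_{n,a}(z)=\left(\frac{\partial}{\partial\overline{a}}\right)^n\frac{1}{1-\overline{a}z}=\frac{n!\,z^n}{(1-\overline{a}z)^{n+1}}$ and $e_{n,a}=k_{n,a}/\|k_{n,a}\|$. *)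

From Stdlib Require Import Reals Arith.
From Coquelicot Require Export Coquelicot.
Open Scope R_scope.

Definition H2 (f : C -> C) (c : nat -> C) : Prop :=
  ex_series (fun k => (Cmod (c k)) ^ 2) /\
  forall z : C, Cmod z < 1 -> is_series (fun k => Cmult (c k) (pow_n z k)) (f z).

Definition h2norm (d : nat -> C) : R := sqrt (Series (fun k => (Cmod (d k)) ^ 2)).

Definition kna (n : nat) (a : C) (z : C) : C :=
  Cdiv (Cmult (RtoC (INR (Factorial.fact n))) (pow_n z n))
       (pow_n (Cminus (RtoC 1) (Cmult (Cconj a) z)) (S n)).

(* Let d be the Taylor coefficients of k_{n,a} and w = conj a. Since
   (1 - w z)^(n+1) k_{n,a}(z) = n! z^n, undoing the factors (1 - w z) one at a time
   shows d_k = rho_k w^(k-n) with rho nonnegative, nondecreasing and zero below n.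
   Hence |d_(k+m)| >= |d_k| |a|^m, and summing this geometric lower bound gives
   |d_k|^2 <= (1 - |a|^2) ||k_{n,a}||^2: every coefficient of e_{n,a} is at most
   sqrt (1 - |a|^2), whatever n is.
   Pairing f with a unit vector whose coefficients are all small gives a small
   result: finitely many leading coefficients of f meet small coefficients, and the
   l^2-small tail of f is handled by |c| |e| <= |c|^2 / (2 delta) + delta |e|^2 / 2. *)

From Stdlib Require Import Reals Lra Lia.
From Coquelicot Require Import Coquelicot.
Open Scope R_scope.

Lemma norm_is_series_le {K : AbsRing} {V : NormedModule K}
    (a : nat -> V) (b : nat -> R) (la : V) (lb : R) :
  is_series a la -> is_series b lb -> (forall k, norm (a k) <= b k) ->
  norm la <= lb.
Proof.
  intros Ha Hb Hab.
  apply (is_lim_seq_le (fun m => norm (sum_n a m)) (sum_n b) (norm la) lb).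
  - intro m. eapply Rle_trans; [apply norm_sum_n_m | apply sum_n_m_le, Hab].
  - exact (filterlim_comp _ _ _ (sum_n a) norm _ _ _ Ha (filterlim_norm la)).
  - exact Hb.
Qed.

Lemma sum_n_single {G : AbelianMonoid} (a : nat -> G) (n : nat) :
  (forall k, k <> n -> a k = zero) -> forall m, (n <= m)%nat -> sum_n a m = a n.
Proof.
  intros Ha m Hm; induction Hm as [|m Hm IH].
  - destruct n as [|n]; [apply sum_O|].
    rewrite sum_Sn, (sum_n_ext_loc a (fun _ => zero)).
    + unfold sum_n. rewrite sum_n_m_const_zero. apply plus_zero_l.
    + intros k Hk. apply Ha. lia.
  - rewrite sum_Sn, IH, (Ha (S m)) by lia. apply plus_zero_r.
Qed.

Lemma is_series_single {K : AbsRing} {V : NormedModule K} (a : nat -> V) (n : nat) :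
  (forall k, k <> n -> a k = zero) -> is_series a (a n).
Proof.
  intro Ha. apply (filterlim_ext_loc (fun _ => a n)).
  - exists n. intros m Hm. symmetry. now apply sum_n_single.
  - apply filterlim_const.
Qed.

Lemma is_series_C_ext (a b : nat -> C) (la lb : C) :
  (forall k, a k = b k) -> la = lb -> is_series a la -> is_series b lb.
Proof. intros Hab <-. apply is_series_ext, Hab. Qed.

Lemma sum_n_nonneg (sigma : nat -> R) (k : nat) :
  (forall j, 0 <= sigma j) -> 0 <= sum_n sigma k.
Proof.
  intro Hsigma. induction k as [|k IH]; [rewrite sum_O; apply Hsigma|].
  rewrite sum_Sn. specialize (Hsigma (S k)). change (0 <= sum_n sigma k + sigma (S k)). lra.
Qed.

Lemma sum_n_le_add (sigma : nat -> R) (k m : nat) :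
  (forall j, 0 <= sigma j) -> sum_n sigma k <= sum_n sigma (k + m).
Proof.
  intro Hsigma. induction m as [|m IH]; [rewrite Nat.add_0_r; lra|].
  rewrite Nat.add_succ_r, sum_Sn. specialize (Hsigma (S (k + m))).
  change (sum_n sigma k <= sum_n sigma (k + m) + sigma (S (k + m))). lra.
Qed.

Lemma Series_nonneg (A : nat -> R) :
  (forall k, 0 <= A k) -> ex_series A -> 0 <= Series A.
Proof.
  intros HA HexA.
  apply (is_lim_seq_le (fun _ => 0) (sum_n A) 0 (Series A)).
  - intro m. now apply sum_n_nonneg.
  - apply is_lim_seq_const.
  - exact (Series_correct A HexA).
Qed.

Lemma Series_shift_le (A : nat -> R) (M : nat) :
  (forall k, 0 <= A k) -> ex_series A -> Series (fun k => A (M + k)%nat) <= Series A.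
Proof.
  intros HA HexA. destruct M as [|M].
  - right. apply Series_ext. reflexivity.
  - rewrite (Series_incr_n A (S M)) by (lia || exact HexA). simpl pred.
    assert (0 <= sum_f_R0 A M) by (apply cond_pos_sum, HA). lra.
Qed.

Lemma Series_tail_lt (A : nat -> R) (eta : R) :
  ex_series A -> 0 < eta -> exists N, Series (fun k => A (S N + k)%nat) < eta.
Proof.
  intros HexA Heta.
  destruct (proj1 (filterlim_locally _ _) (Series_correct A HexA) (mkposreal _ Heta))
    as [N HN].
  exists N.
  assert (Hsplit := Series_incr_n A (S N) ltac:(lia) HexA).
  simpl pred in Hsplit. rewrite <- sum_n_Reals in Hsplit.
  specialize (HN N (le_n N)). change (Rabs (sum_n A N - Series A) < eta) in HN.
  rewrite Hsplit, Rabs_minus_sym in HN.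
  replace (sum_n A N + _ - sum_n A N) with (Series (fun k => A (S N + k)%nat)) in HN by ring.
  eapply Rle_lt_trans; [apply Rle_abs | exact HN].
Qed.

Lemma is_series_Re_Im (u : nat -> C) (l : C) :
  is_series u l ->
  is_series (fun k => Re (u k)) (Re l) /\ is_series (fun k => Im (u k)) (Im l).
Proof.
  intro Hu.
  assert (Hparts : forall m, sum_n (fun k => Re (u k)) m = Re (sum_n u m) /\
                             sum_n (fun k => Im (u k)) m = Im (sum_n u m)).
  { induction m as [|m [IHre IHim]].
    - now rewrite !sum_O.
    - rewrite !sum_Sn, IHre, IHim. now split. }
  split.
  - apply (filterlim_ext (fun m => Re (sum_n u m))); [intro m; symmetry; apply Hparts|].
    eapply filterlim_comp; [exact Hu|].
    apply filterlim_locally; intro eps; exists eps; intros z [Hre _]; exact Hre.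
  - apply (filterlim_ext (fun m => Im (sum_n u m))); [intro m; symmetry; apply Hparts|].
    eapply filterlim_comp; [exact Hu|].
    apply filterlim_locally; intro eps; exists eps; intros z [_ Him]; exact Him.
Qed.

Lemma CV_radius_ge_of_ex_series (a : nat -> R) (x : R) :
  0 <= x -> ex_series (fun k => a k * x ^ k) -> Rbar_le x (CV_radius a).
Proof.
  intros Hx Hex. apply (proj1 (CV_radius_bounded a)).
  destruct (filterlim_bounded (fun k => a k * x ^ k)) as [M HM].
  { exists 0. exact (ex_series_lim_0 _ Hex). }
  now exists M.
Qed.

Lemma real_power_series_coef_unique (a b : nat -> R) (F : R -> R) :
  (forall x, Rabs x < 1 -> is_series (fun k => a k * x ^ k) (F x)) ->
  (forall x, Rabs x < 1 -> is_series (fun k => b k * x ^ k) (F x)) ->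
  forall k, a k = b k.
Proof.
  intros Ha Hb k.
  assert (Hhalf : Rabs (1 / 2) < 1) by (rewrite Rabs_pos_eq; lra).
  assert (Hpos : forall c, (forall x, Rabs x < 1 -> is_series (fun k => c k * x ^ k) (F x)) ->
                           Rbar_lt 0 (CV_radius c)).
  { intros c Hc. apply (Rbar_lt_le_trans _ (1 / 2)); [simpl; lra|].
    apply CV_radius_ge_of_ex_series; [lra|]. eexists. now apply Hc. }
  apply PSeries_ext_recip; [now apply Hpos | now apply Hpos |].
  exists (mkposreal 1 Rlt_0_1). intros x Hx.
  change (Rabs (x - 0) < 1) in Hx. rewrite Rminus_0_r in Hx.
  rewrite !(is_pseries_unique _ x (F x)); auto; apply is_pseries_R; auto.
Qed.

Lemma power_series_coef_unique (u v : nat -> C) (F : R -> C) :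
  (forall x : R, Rabs x < 1 -> is_series (fun k => (u k * pow_n (RtoC x) k)%C) (F x)) ->
  (forall x : R, Rabs x < 1 -> is_series (fun k => (v k * pow_n (RtoC x) k)%C) (F x)) ->
  forall k, u k = v k.
Proof.
  intros Hu Hv k.
  assert (Hpow : forall x m, pow_n (RtoC x) m = RtoC (x ^ m)).
  { intros x m. induction m as [|m IH]; [reflexivity|]. simpl. now rewrite IH, RtoC_mult. }
  assert (Hparts : forall w : nat -> C,
             (forall x, Rabs x < 1 -> is_series (fun k => (w k * pow_n (RtoC x) k)%C) (F x)) ->
             forall x, Rabs x < 1 ->
             is_series (fun k => Re (w k) * x ^ k) (Re (F x)) /\
             is_series (fun k => Im (w k) * x ^ k) (Im (F x))).
  { intros w Hw x Hx. destruct (is_series_Re_Im _ _ (Hw x Hx)) as [Hre Him].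
    split.
    - refine (is_series_ext _ _ _ _ Hre). intro m. rewrite Hpow. apply re_scal_r.
    - refine (is_series_ext _ _ _ _ Him). intro m. rewrite Hpow. apply im_scal_r. }
  apply injective_projections.
  - apply (real_power_series_coef_unique (fun k => Re (u k)) (fun k => Re (v k))
             (fun x => Re (F x))); intros x Hx; [apply (Hparts u Hu x Hx) | apply (Hparts v Hv x Hx)].
  - apply (real_power_series_coef_unique (fun k => Im (u k)) (fun k => Im (v k))
             (fun x => Im (F x))); intros x Hx; [apply (Hparts u Hu x Hx) | apply (Hparts v Hv x Hx)].
Qed.

Definition coefs_mul_1_sub (w : C) (x : nat -> C) (k : nat) : C :=
  match k with O => x O | S j => (x (S j) - w * x j)%C end.

Lemma is_series_coefs_mul_1_sub (w z l : C) (x : nat -> C) :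
  is_series (fun k => (x k * pow_n z k)%C) l ->
  is_series (fun k => (coefs_mul_1_sub w x k * pow_n z k)%C) ((1 - w * z) * l)%C.
Proof.
  intro Hx.
  set (shifted := fun k => match k with O => RtoC 0 | S j => (w * z * (x j * pow_n z j))%C end).
  assert (Hshifted : is_series shifted (w * z * l)%C).
  { apply is_series_decr_1.
    refine (is_series_C_ext _ _ _ _ _ _ (is_series_scal (w * z)%C _ _ Hx)).
    - reflexivity.
    - change ((w * z) * l = w * z * l - 0)%C. ring. }
  refine (is_series_C_ext _ _ _ _ _ _ (is_series_minus _ _ _ _ Hx Hshifted)).
  - intros [|k]; [change (x 0%nat * 1 - 0 = x 0%nat * 1)%C
                 | change (x (S k) * (z * pow_n z k) - w * z * (x k * pow_n z k)
                           = (x (S k) - w * x k) * (z * pow_n z k))%C]; ring.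
  - change (l - w * z * l = (1 - w * z) * l)%C. ring.
Qed.

Lemma is_series_iter_coefs_mul_1_sub (w z l : C) (x : nat -> C) (j : nat) :
  is_series (fun k => (x k * pow_n z k)%C) l ->
  is_series (fun k => (Nat.iter j (coefs_mul_1_sub w) x k * pow_n z k)%C)
            (pow_n (1 - w * z) j * l)%C.
Proof.
  intro Hx. induction j as [|j IH]; simpl.
  - now rewrite Cmult_1_l.
  - rewrite <- Cmult_assoc. now apply is_series_coefs_mul_1_sub.
Qed.

Lemma Cmod_pow_n (z : C) (m : nat) : Cmod (pow_n z m) = Cmod z ^ m.
Proof. apply Cmod_pow. Qed.

Lemma pow_n_1_sub_neq_0 (w z : C) (m : nat) :
  Cmod w * Cmod z < 1 -> pow_n (1 - w * z)%C m <> RtoC 0.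
Proof.
  intro Hwz. apply Cmod_gt_0. rewrite Cmod_pow_n. apply pow_lt.
  assert (Htri := Cmod_triangle (1 - w * z)%C (w * z)%C).
  replace (1 - w * z + w * z)%C with (RtoC 1) in Htri by ring.
  rewrite Cmod_1, Cmod_mult in Htri. lra.
Qed.

Lemma iter_coefs_mul_1_sub_kna (a : C) (n : nat) (d : nat -> C) :
  Cmod a < 1 -> H2 (kna n a) d ->
  forall k, Nat.iter (S n) (coefs_mul_1_sub (Cconj a)) d k =
            (if Nat.eq_dec k n then RtoC (INR (Factorial.fact n)) else 0%C).
Proof.
  intros Ha [_ Hd].
  apply (power_series_coef_unique _ _ (fun x => RtoC (INR (Factorial.fact n)) * pow_n (RtoC x) n)%C);
    intros x Hx.
  - assert (Hx' : Cmod (RtoC x) < 1) by now rewrite Cmod_R.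
    refine (is_series_C_ext _ _ _ _ _ _ (is_series_iter_coefs_mul_1_sub _ _ _ _ (S n) (Hd _ Hx')));
      [reflexivity|].
    assert (Hden := pow_n_1_sub_neq_0 (Cconj a) (RtoC x) (S n)).
    rewrite Cmod_conj in Hden.
    unfold kna. field. apply Hden.
    assert (0 <= Cmod a) by apply Cmod_ge_0. assert (0 <= Cmod (RtoC x)) by apply Cmod_ge_0. nra.
  - refine (is_series_C_ext _ _ _ _ _ _ (is_series_single _ n _)); [reflexivity| |].
    + simpl. destruct (Nat.eq_dec n n); [reflexivity | contradiction].
    + intros k Hk. simpl. destruct (Nat.eq_dec k n); [contradiction|]. apply Cmult_0_l.
Qed.

(* For k < n the exponent k - n truncates to 0; the first clause makes x k = 0 there. *)
Definition coefs_profile (n : nat) (w : C) (rho : nat -> R) (x : nat -> C) : Prop :=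
  (forall k, (k < n)%nat -> rho k = 0) /\
  forall k, x k = (RtoC (rho k) * pow_n w (k - n))%C.

Lemma coefs_profile_mul_1_sub_inv (n : nat) (w : C) (rho : nat -> R) (x : nat -> C) :
  coefs_profile n w rho (coefs_mul_1_sub w x) -> coefs_profile n w (sum_n rho) x.
Proof.
  intros [Hsupp Hx].
  assert (Hsupp' : forall k, (k < n)%nat -> sum_n rho k = 0).
  { induction k as [|k IH]; intro Hk.
    - rewrite sum_O. now apply Hsupp.
    - rewrite sum_Sn, IH, Hsupp by lia. apply Rplus_0_l. }
  split; [exact Hsupp'|].
  induction k as [|k IH].
  - rewrite sum_O. exact (Hx 0%nat).
  - replace (x (S k)) with (coefs_mul_1_sub w x (S k) + w * x k)%C by (simpl; ring).
    rewrite Hx, IH, sum_Sn. change (plus (sum_n rho k) (rho (S k))) with (sum_n rho k + rho (S k)).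
    destruct (Nat.lt_ge_cases k n) as [Hk | Hk].
    + rewrite Hsupp' by exact Hk. replace (k - n)%nat with 0%nat by lia.
      rewrite Rplus_0_l. change (pow_n w 0) with (RtoC 1). ring.
    + replace (S k - n)%nat with (S (k - n)) by lia.
      change (pow_n w (S (k - n))) with (w * pow_n w (k - n))%C.
      rewrite RtoC_plus. ring.
Qed.

Lemma coefs_profile_iter_mul_1_sub_inv (n : nat) (w : C) (x : nat -> C) (j : nat) :
  forall rho, (forall k, 0 <= rho k) ->
  coefs_profile n w rho (Nat.iter (S j) (coefs_mul_1_sub w) x) ->
  exists sigma, (forall k, 0 <= sigma k) /\ coefs_profile n w (sum_n sigma) x.
Proof.
  induction j as [|j IH]; intros rho Hrho Hprof.
  - exists rho. split; [exact Hrho|]. now apply coefs_profile_mul_1_sub_inv.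
  - apply (IH (sum_n rho)).
    + intro k. now apply sum_n_nonneg.
    + now apply coefs_profile_mul_1_sub_inv.
Qed.

Lemma coefs_profile_growth (n : nat) (w : C) (sigma : nat -> R) (x : nat -> C) :
  (forall k, 0 <= sigma k) -> coefs_profile n w (sum_n sigma) x ->
  forall k m, Cmod (x k) * Cmod w ^ m <= Cmod (x (k + m)%nat).
Proof.
  intros Hsigma [Hsupp Hx] k m.
  assert (Hmod : forall j, Cmod (x j) = sum_n sigma j * Cmod w ^ (j - n)).
  { intro j. rewrite Hx, Cmod_mult, Cmod_R, Cmod_pow_n, Rabs_pos_eq by now apply sum_n_nonneg.
    reflexivity. }
  rewrite !Hmod.
  assert (Hw := Cmod_ge_0 w).
  destruct (Nat.lt_ge_cases k n) as [Hk | Hk].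
  - rewrite Hsupp by exact Hk. rewrite !Rmult_0_l.
    apply Rmult_le_pos; [now apply sum_n_nonneg | now apply pow_le].
  - replace (k + m - n)%nat with (k - n + m)%nat by lia.
    rewrite pow_add, <- Rmult_assoc.
    apply Rmult_le_compat_r; [now apply pow_le|].
    apply Rmult_le_compat_r; [now apply pow_le|].
    now apply sum_n_le_add.
Qed.

Lemma coef_le_of_geometric_growth (A : nat -> R) (s : R) (k : nat) :
  0 <= s < 1 -> (forall j, 0 <= A j) -> ex_series A ->
  (forall m, A k * s ^ m <= A (k + m)%nat) -> A k <= (1 - s) * Series A.
Proof.
  intros Hs HA HexA Hgrowth.
  assert (Hgeom : Series (fun m => A k * s ^ m) = A k / (1 - s)).
  { rewrite Series_scal_l, Series_geom by (rewrite Rabs_pos_eq; lra). reflexivity. }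
  assert (Hle : A k / (1 - s) <= Series A).
  { rewrite <- Hgeom. eapply Rle_trans; [|apply (Series_shift_le A k HA HexA)].
    apply Series_le; [|now apply ex_series_incr_n].
    intro m. split; [apply Rmult_le_pos; [apply HA | now apply pow_le] | apply Hgrowth]. }
  apply (Rmult_le_compat_l (1 - s)) in Hle; [|lra].
  replace ((1 - s) * (A k / (1 - s))) with (A k) in Hle by (field; lra). exact Hle.
Qed.

Lemma kna_coef_sq_le (a : C) (n : nat) (d : nat -> C) :
  Cmod a < 1 -> H2 (kna n a) d ->
  forall k, Cmod (d k) ^ 2 <= (1 - Cmod a ^ 2) * Series (fun j => Cmod (d j) ^ 2).
Proof.
  intros Ha Hd k.
  destruct (coefs_profile_iter_mul_1_sub_inv n (Cconj a) d n
              (fun j => if Nat.eq_dec j n then INR (Factorial.fact n) else 0))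
    as [sigma [Hsigma Hprof]].
  - intro j. destruct (Nat.eq_dec j n); [apply pos_INR | lra].
  - split.
    + intros j Hj. destruct (Nat.eq_dec j n); [lia | reflexivity].
    + intro j. rewrite (iter_coefs_mul_1_sub_kna a n d Ha Hd).
      destruct (Nat.eq_dec j n) as [-> | _].
      * rewrite Nat.sub_diag. change (pow_n (Cconj a) 0) with (RtoC 1). ring.
      * ring.
  - assert (Ha0 := Cmod_ge_0 a).
    apply (coef_le_of_geometric_growth (fun j => Cmod (d j) ^ 2)).
    + split; [apply pow2_ge_0 | nra].
    + intro j. apply pow2_ge_0.
    + exact (proj1 Hd).
    + intro m. assert (Hgrowth := coefs_profile_growth _ _ _ _ Hsigma Hprof k m).
      rewrite Cmod_conj in Hgrowth.
      replace (Cmod (d k) ^ 2 * (Cmod a ^ 2) ^ m) with ((Cmod (d k) * Cmod a ^ m) ^ 2)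
        by (rewrite <- pow_mult, Nat.mul_comm, pow_mult; ring).
      apply pow_incr. split; [|exact Hgrowth].
      apply Rmult_le_pos; [apply Cmod_ge_0 | now apply pow_le].
Qed.

Lemma Rmult_le_amgm (x y delta : R) :
  0 < delta -> x * y <= x ^ 2 / (2 * delta) + y ^ 2 * (delta / 2).
Proof.
  intro Hdelta.
  assert (Hsq : 0 <= (x - delta * y) ^ 2 / (2 * delta))
    by (apply Rdiv_le_0_compat; [apply pow2_ge_0 | lra]).
  replace ((x - delta * y) ^ 2 / (2 * delta))
    with (x ^ 2 / (2 * delta) + y ^ 2 * (delta / 2) - x * y) in Hsq by (field; lra).
  lra.
Qed.

Lemma Cmod_sum_n_pairing_le (c e : nat -> C) (tau : R) (N : nat) :
  (forall k, Cmod (e k) <= tau) ->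
  Cmod (sum_n (fun k => (c k * Cconj (e k))%C) N) <= tau * sum_n (fun k => Cmod (c k)) N.
Proof.
  intro Hsmall.
  apply (Rle_trans _ (sum_n (fun k => Cmod (c k * Cconj (e k))%C) N));
    [apply (norm_sum_n_m (fun k => (c k * Cconj (e k))%C) 0 N)|].
  rewrite <- (sum_n_mult_l (K := R_Ring)). apply sum_n_m_le. intro k.
  rewrite Cmod_mult, Cmod_conj, Rmult_comm.
  apply Rmult_le_compat_r; [apply Cmod_ge_0 | apply Hsmall].
Qed.

Lemma Cmod_pairing_le_amgm (c e : nat -> C) (L : C) (delta : R) :
  0 < delta -> ex_series (fun k => Cmod (c k) ^ 2) -> ex_series (fun k => Cmod (e k) ^ 2) ->
  is_series (fun k => (c k * Cconj (e k))%C) L ->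
  Cmod L <= Series (fun k => Cmod (c k) ^ 2) / (2 * delta)
            + Series (fun k => Cmod (e k) ^ 2) * (delta / 2).
Proof.
  intros Hdelta Hc He HL.
  apply (norm_is_series_le _ (fun k => Cmod (c k) ^ 2 / (2 * delta) + Cmod (e k) ^ 2 * (delta / 2))
           _ _ HL).
  - apply (is_series_plus (V := R_NormedModule)); apply is_series_scal_r, Series_correct;
      assumption.
  - intro k. change (norm (c k * Cconj (e k))%C) with (Cmod (c k * Cconj (e k))%C).
    rewrite Cmod_mult, Cmod_conj. now apply Rmult_le_amgm.
Qed.

Lemma pairing_small_of_coefs_small (c : nat -> C) (eps : R) :
  ex_series (fun k => Cmod (c k) ^ 2) -> 0 < eps ->
  exists tau, 0 < tau /\
    forall (e : nat -> C) (L : C),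
      ex_series (fun k => Cmod (e k) ^ 2) -> Series (fun k => Cmod (e k) ^ 2) <= 1 ->
      (forall k, Cmod (e k) <= tau) ->
      is_series (fun k => (c k * Cconj (e k))%C) L -> Cmod L < eps.
Proof.
  intros Hc Heps.
  set (delta := eps / 2).
  assert (Hdelta : 0 < delta) by (unfold delta; lra).
  destruct (Series_tail_lt _ (delta ^ 2) Hc ltac:(nra)) as [N HN].
  set (head_l1 := sum_n (fun k => Cmod (c k)) N).
  assert (Hhead_l1 : 0 <= head_l1) by (apply sum_n_nonneg; intro; apply Cmod_ge_0).
  exists (delta / (head_l1 + 1)). split; [apply Rdiv_lt_0_compat; lra|].
  intros e L He He1 Hsmall HL.
  set (head := sum_n (fun k => (c k * Cconj (e k))%C) N).
  assert (Hhead : Cmod head < delta).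
  { eapply Rle_lt_trans; [now apply Cmod_sum_n_pairing_le|]. fold head_l1.
    apply (Rmult_lt_reg_r (head_l1 + 1)); [lra|]. field_simplify; nra. }
  assert (Htail : Cmod (L - head)%C <= delta / 2 + 1 * (delta / 2)).
  { eapply Rle_trans.
    { apply (Cmod_pairing_le_amgm (fun k => c (S N + k)%nat) (fun k => e (S N + k)%nat));
        [exact Hdelta | now apply (ex_series_incr_n _ (S N)) in Hc
        | now apply (ex_series_incr_n _ (S N)) in He |].
      apply (is_series_incr_n (fun k => (c k * Cconj (e k))%C) (S N)); [lia|].
      refine (is_series_C_ext _ _ _ _ _ _ HL); [reflexivity|].
      change (L = L - head + head)%C. ring. }
    apply Rplus_le_compat.
    - apply (Rmult_le_reg_r (2 * delta)); [lra|].
      replace (_ / (2 * delta) * (2 * delta)) with (Series (fun k => Cmod (c (S N + k)%nat) ^ 2))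
        by (field; lra).
      replace (delta / 2 * (2 * delta)) with (delta ^ 2) by field. lra.
    - apply Rmult_le_compat_r; [lra|].
      eapply Rle_trans; [|exact He1].
      apply (Series_shift_le (fun k => Cmod (e k) ^ 2)); [intro; apply pow2_ge_0 | exact He]. }
  assert (Htri := Cmod_triangle head (L - head)%C).
  replace (head + (L - head))%C with L in Htri by ring.
  unfold delta in *. lra.
Qed.

Lemma Rdiv_le_of_le_mul (x y D : R) :
  0 <= y -> 0 <= D -> x <= y * D -> x / D <= y.
Proof.
  intros Hy HD Hx. destruct (Req_dec D 0) as [-> | HD0].
  - unfold Rdiv. rewrite Rinv_0, Rmult_0_r. exact Hy.
  - apply (Rmult_le_reg_r D); [lra|]. unfold Rdiv. rewrite Rmult_assoc, Rinv_l; lra.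
Qed.

(* Also for D = 0, where both sides are 0 because z / 0 = 0 and / 0 = 0. *)
Lemma Cmod_div_sqrt_sq (z : C) (D : R) :
  0 <= D -> Cmod (z / RtoC (sqrt D))%C ^ 2 = Cmod z ^ 2 / D.
Proof.
  intro HD. destruct (Req_dec D 0) as [-> | HD0].
  - rewrite sqrt_0. unfold Rdiv. rewrite Rinv_0, Rmult_0_r.
    replace (z / RtoC 0)%C with (RtoC 0).
    + rewrite Cmod_0. ring.
    + unfold Cdiv, Cinv, Rdiv. simpl. rewrite Ropp_0, !Rmult_0_l.
      apply injective_projections; simpl; ring.
  - assert (Hsqrt : 0 < sqrt D) by (apply sqrt_lt_R0; lra).
    rewrite Cmod_div by (intro Hz; apply RtoC_inj in Hz; lra).
    rewrite Cmod_R, Rabs_pos_eq by lra.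
    unfold Rdiv. rewrite Rpow_mult_distr, pow_inv, pow2_sqrt by lra. reflexivity.
Qed.

Lemma normalized_sq_series_le_1 (d : nat -> C) :
  ex_series (fun k => Cmod (d k) ^ 2) ->
  ex_series (fun k => Cmod (d k / RtoC (h2norm d))%C ^ 2) /\
  Series (fun k => Cmod (d k / RtoC (h2norm d))%C ^ 2) <= 1.
Proof.
  intro Hd.
  set (D := Series (fun k => Cmod (d k) ^ 2)).
  assert (HD : 0 <= D) by (apply Series_nonneg; [intro; apply pow2_ge_0 | exact Hd]).
  assert (Hnormed : forall k, Cmod (d k / RtoC (h2norm d))%C ^ 2 = Cmod (d k) ^ 2 / D)
    by (intro k; now apply Cmod_div_sqrt_sq).
  split.
  - apply (ex_series_ext (fun k => Cmod (d k) ^ 2 / D)); [intro k; now rewrite Hnormed|].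
    exists (D / D). now apply is_series_scal_r, Series_correct.
  - rewrite (Series_ext _ (fun k => Cmod (d k) ^ 2 / D)) by (intro k; apply Hnormed).
    unfold Rdiv. rewrite Series_scal_r. fold D. apply Rdiv_le_of_le_mul; lra.
Qed.

Lemma kna_normalized_coef_sq_le (a : C) (n : nat) (d : nat -> C) :
  Cmod a < 1 -> H2 (kna n a) d ->
  forall k, Cmod (d k / RtoC (h2norm d))%C ^ 2 <= 1 - Cmod a ^ 2.
Proof.
  intros Ha Hd k.
  assert (Ha0 := Cmod_ge_0 a).
  assert (HD : 0 <= Series (fun j => Cmod (d j) ^ 2))
    by (apply Series_nonneg; [intro; apply pow2_ge_0 | exact (proj1 Hd)]).
  unfold h2norm. rewrite Cmod_div_sqrt_sq by exact HD.
  apply Rdiv_le_of_le_mul; [nra | exact HD | now apply (kna_coef_sq_le a n d)].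
Qed.

Theorem lemma3 (f : C -> C) (c : nat -> C) :
  H2 f c ->
  forall eps : R, 0 < eps ->
  exists r : R, r < 1 /\
    forall (a : C) (n : nat) (d : nat -> C) (L : C),
      Cmod a < 1 -> r < Cmod a ->
      H2 (kna n a) d ->
      is_series (fun k => Cmult (c k) (Cconj (Cdiv (d k) (RtoC (h2norm d))))) L ->
      Cmod L < eps.
Proof.
  intros [Hc _] eps Heps.
  destruct (pairing_small_of_coefs_small c eps Hc Heps) as [tau [Htau Hpair]].
  exists (1 - tau ^ 2 / 2). split; [nra|].
  intros a n d L Ha Hr Hd HL.
  destruct (normalized_sq_series_le_1 d (proj1 Hd)) as [Hex Hle1].
  apply (Hpair _ L Hex Hle1); [|exact HL].
  intro k.
  assert (Hk := kna_normalized_coef_sq_le a n d Ha Hd k).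
  assert (Ha0 := Cmod_ge_0 a).
  assert (Hek := Cmod_ge_0 (d k / RtoC (h2norm d))%C).
  nra.
Qed.
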